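(* Every generic quadrangle $P$ in $\mathbb{R}^3$ is regular. Moreover, for every support system $u_1,u_2,u_3,u_4$ of $P$, the derived quadrangle $P'=B_1B_2B_3B_4$ is a plane quadrangle (its four vertices are coplanar) with oriented area $0$; in particular it is self-intersecting.
   Context: For a closed polygon $P=A_1\ldots A_n$ in $\mathbb{R}^3$ put $v_1=\overline{A_1A_2},\ldots,v_n=\overline{A_nA_1}$, indices cyclic mod $n$. $P$ is generic if any two consecutive $v_i,v_{i+1}$ are not collinear and any three consecutive $v_i,v_{i+1},v_{i+2}$ are not coplanar. A support system of $P$ is a tuple $u_1,\ldots,u_n$ with $[u_i,u_{i+1}]=v_{i+1}$ for all $i$ (cyclically; $[\cdot,\cdot]$ is the cross product). A generic polygon is regular if it has a support system. Given a support system, fix an origin $O$ and let $B_i$ be the point with $\overline{OB_i}=u_i$; the polygon $P'=B_1\ldots B_n$ (edge vectors $u_2-u_1,\ldots,u_1-u_n$) is called the derived polygon (a derivative) of $P$. A closed polygon $B_1\ldots B_n$ has oriented area $0$ if $\sum_{i=1}^n[\overline{OB_i},\overline{OB_{i+1}}]=0$ (a quantity independent of $O$); for a plane polygon this means its signed area in its plane is zero. *)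

From HB Require Import structures.
From mathcomp Require Import all_boot all_order all_algebra.
Set Implicit Arguments. Unset Strict Implicit. Unset Printing Implicit Defensive.
Import Order.TTheory GRing.Theory Num.Theory.
Local Open Scope ring_scope.

(* Vectors/points of R^3 are row vectors 'rV[R]_3 (origin O = 0). *)
Section Defs.
Variable R : realFieldType.
Notation vec := 'rV[R]_3.

Definition coord (x : vec) (k : nat) : R := x ord0 (inord k).

Definition cross (x y : vec) : vec :=
  \row_(k < 3)
    (if val k == 0%N then coord x 1 * coord y 2 - coord x 2 * coord y 1
     else if val k == 1%N then coord x 2 * coord y 0 - coord x 0 * coord y 2
     else coord x 0 * coord y 1 - coord x 1 * coord y 0).

Definition dot (x y : vec) : R := \sum_(k < 3) x ord0 k * y ord0 k.

Definition collinear (x y : vec) : Prop :=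
  exists a b : R, (a != 0 \/ b != 0) /\ a *: x + b *: y = 0.

Definition coplanar (x y z : vec) : Prop :=
  exists a b c : R, (a != 0 \/ b != 0 \/ c != 0) /\ a *: x + b *: y + c *: z = 0.

Variable n : nat.

Definition edge (A : 'I_n -> vec) (i : 'I_n) : vec := A (ordS i) - A i.

Definition generic (A : 'I_n -> vec) : Prop :=
  (forall i : 'I_n, ~ collinear (edge A i) (edge A (ordS i))) /\
  (forall i : 'I_n, ~ coplanar (edge A i) (edge A (ordS i)) (edge A (ordS (ordS i)))).

Definition support_system (A : 'I_n -> vec) (u : 'I_n -> vec) : Prop :=
  forall i : 'I_n, cross (u i) (u (ordS i)) = edge A (ordS i).

Definition regular (A : 'I_n -> vec) : Prop :=
  generic A /\ exists u, support_system A u.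

(* oriented area zero of the closed polygon B_1 ... B_n, O = origin *)
Definition oriented_area_zero (B : 'I_n -> vec) : Prop :=
  \sum_(i < n) cross (B i) (B (ordS i)) = 0.

Definition coplanar_points (B : 'I_n -> vec) : Prop :=
  exists (N : vec) (d : R), N != 0 /\ forall i, dot N (B i) = d.

End Defs.

Definition segments_meet (R : realFieldType) (P Q X Y : 'rV[R]_3) : Prop :=
  exists s t : R, [/\ 0 <= s <= 1, 0 <= t <= 1 &
    (1 - s) *: P + s *: Q = (1 - t) *: X + t *: Y].

Definition self_intersecting4 (R : realFieldType) (B : 'I_4 -> 'rV[R]_3) : Prop :=
  segments_meet (B (inord 0)) (B (inord 1)) (B (inord 2)) (B (inord 3)) \/
  segments_meet (B (inord 1)) (B (inord 2)) (B (inord 3)) (B (inord 0)).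

From Pilot Require Import Defs.
From HB Require Import structures.
From mathcomp Require Import all_boot all_order all_algebra.
From mathcomp Require Import ring lra.
Import Order.TTheory GRing.Theory Num.Theory.
Local Open Scope ring_scope.
Set Implicit Arguments. Unset Strict Implicit. Unset Printing Implicit Defensive.

(* Write w0, w1, w2 for the first three edges of the quadrangle; the fourth
   is -(w0 + w1 + w2), and genericity makes D = [w0, w1, w2] (triple product)
   nonzero.  Put X = w0 x w1, Y = w1 x w2, Z = w2 x w0.  Each u_i is
   orthogonal to the two edges it produces, hence proportional to one of
   X, Y, Z - Y, Z - X; comparing the cross products then shows that the
   support systems are exactly
        u = (p X, q Y, p (Z - Y), q (Z - X))   with  p q D = 1
   (Lemmas [quad_support_cross] and [quad_support_shape]).  For such a tuple
   all u_i satisfy <N, u_i> = 1 with N = p w0 + (p + q) w1 + q w2 != 0, and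
   explicit parameters exhibit a pair of opposite sides that meet.  The
   oriented area vanishes for any n: it is the sum of the edges. *)

(* [coord] from the definitions, not the vector-space coordinate map. *)
Local Notation coord := Defs.coord.

Section Vectors.
Variable R : realFieldType.
Notation vec := 'rV[R]_3.

Lemma vec_ext (x y : vec) :
  coord x 0 = coord y 0 -> coord x 1 = coord y 1 -> coord x 2 = coord y 2 ->
  x = y.
Proof.
move=> h0 h1 h2; apply/rowP => j.
have inordE k (Hk : (k < 3)%N) : Ordinal Hk = inord k.
  by apply: val_inj; rewrite /= inordK.
by case: j => [[|[|[|k]]] Hk] //; rewrite inordE; [exact h0|exact h1|exact h2].
Qed.

Lemma coordD (x y : vec) k : coord (x + y) k = coord x k + coord y k.
Proof. by rewrite /coord mxE. Qed.

Lemma coordN (x : vec) k : coord (- x) k = - coord x k.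
Proof. by rewrite /coord mxE. Qed.

Lemma coordZ (a : R) (x : vec) k : coord (a *: x) k = a * coord x k.
Proof. by rewrite /coord mxE. Qed.

Lemma coord0 k : coord (0 : vec) k = 0.
Proof. by rewrite /coord mxE. Qed.

Lemma coord_cross0 (x y : vec) :
  coord (cross x y) 0 = coord x 1 * coord y 2 - coord x 2 * coord y 1.
Proof. by rewrite {1}/coord /cross mxE /= inordK. Qed.

Lemma coord_cross1 (x y : vec) :
  coord (cross x y) 1 = coord x 2 * coord y 0 - coord x 0 * coord y 2.
Proof. by rewrite {1}/coord /cross mxE /= inordK. Qed.

Lemma coord_cross2 (x y : vec) :
  coord (cross x y) 2 = coord x 0 * coord y 1 - coord x 1 * coord y 0.
Proof. by rewrite {1}/coord /cross mxE /= inordK. Qed.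

Lemma dotE (x y : vec) :
  dot x y = coord x 0 * coord y 0 + coord x 1 * coord y 1 + coord x 2 * coord y 2.
Proof.
rewrite /dot !big_ord_recr big_ord0 /= add0r /coord.
by congr (_ * _ + _ * _ + _ * _); congr (_ ord0 _); apply: val_inj; rewrite /= inordK.
Qed.

End Vectors.

(* Expand dot and cross products into coordinates, so that identities between
   polynomial vector expressions reduce to [ring]. *)
Ltac coord_simpl :=
  do 5 rewrite ?dotE ?coordD ?coordN ?coordZ ?coord0
               ?coord_cross0 ?coord_cross1 ?coord_cross2.
Ltac vec_ring := apply: vec_ext; coord_simpl; ring.

Section CrossProduct.
Variable R : realFieldType.
Notation vec := 'rV[R]_3.

Definition triple (a b c : vec) : R := dot a (cross b c).

Lemma triple_cycle (a b c : vec) : triple b c a = triple a b c.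
Proof. rewrite /triple; coord_simpl; ring. Qed.

Lemma dot_cross_l (x y : vec) : dot x (cross x y) = 0.
Proof. coord_simpl; ring. Qed.

Lemma dot_cross_r (x y : vec) : dot y (cross x y) = 0.
Proof. coord_simpl; ring. Qed.

(* Expansion of z in the basis dual to (a, b, c). *)
Lemma triple_expand (a b c z : vec) :
  triple a b c *: z =
  dot z a *: cross b c + dot z b *: cross c a + dot z c *: cross a b.
Proof. rewrite /triple; vec_ring. Qed.

Lemma orthogonal2_cross (a b c z : vec) :
  triple a b c != 0 -> dot z a = 0 -> dot z b = 0 ->
  exists k : R, z = k *: cross a b.
Proof.
move=> hD za zb; exists (dot z c / triple a b c).
apply: (scalerI hD); rewrite triple_expand za zb !scale0r !add0r scalerA.
by rewrite mulrCA mulfV // mulr1.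
Qed.

(* Over an ordered field only the zero vector is isotropic. *)
Lemma dot_self_neq0 (x : vec) : x != 0 -> dot x x != 0.
Proof.
move=> hx; apply/eqP => h; move/eqP: hx; apply; move: h; rewrite dotE => h.
have sq0 (t : R) : t * t = 0 -> t = 0 by move/eqP; rewrite mulf_eq0 orbb => /eqP.
by apply: vec_ext; rewrite coord0; apply: sq0; nra.
Qed.

Lemma triple_neq0 (a b c : vec) : ~ coplanar a b c -> triple a b c != 0.
Proof.
move=> hnc; apply/eqP => hD; apply: hnc.
have [hbc|hbc] := eqVneq (cross b c) 0.
  have [hb|hb] := eqVneq b 0.
    exists 0, 1, 0; split; first by right; left; exact: oner_neq0.
    by rewrite hb !scale0r scaler0 !addr0.
  exists 0, (- dot b c), (dot b b); split; first by right; right; exact: dot_self_neq0.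
  have -> : 0 *: a + (- dot b c) *: b + dot b b *: c = cross (cross b c) b by vec_ring.
  by rewrite hbc; vec_ring.
exists (dot (cross b c) (cross b c)), (- dot (cross a c) (cross b c)),
  (- dot (cross b a) (cross b c)); split; first by left; exact: dot_self_neq0.
have -> : dot (cross b c) (cross b c) *: a + (- dot (cross a c) (cross b c)) *: b
  + (- dot (cross b a) (cross b c)) *: c = triple a b c *: cross b c.
  by rewrite /triple; vec_ring.
by rewrite hD scale0r.
Qed.

Lemma triple_neq0_factors (a b c : vec) :
  triple a b c != 0 -> [/\ a != 0, b != 0 & c != 0].
Proof.
move=> hD; split; apply/eqP => h0; move/eqP: hD; apply.
all: by rewrite h0 /triple; coord_simpl; ring.
Qed.

Lemma scale_fixed (k : R) (w : vec) : w != 0 -> k *: w = w -> k = 1.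
Proof.
move=> hw h; apply/eqP; rewrite -subr_eq0.
by move/eqP: h; rewrite -subr_eq0 -{2}[w]scale1r -scalerBl scaler_eq0 (negPf hw) orbF.
Qed.

End CrossProduct.

(* The edges of a closed polygon sum to zero, hence so does the oriented
   area of any derived polygon: [u_i, u_{i+1}] runs over all the edges. *)
Section ClosedPolygons.
Variables (R : realFieldType) (n : nat).

Lemma edge_sum (A : 'I_n -> 'rV[R]_3) : \sum_(i < n) edge A i = 0.
Proof.
rewrite /edge sumrB.
by rewrite [X in _ - X](reindex_inj (@ordS_inj n)) subrr.
Qed.

Lemma support_oriented_area_zero (A u : 'I_n -> 'rV[R]_3) :
  support_system A u -> oriented_area_zero u.
Proof.
move=> hu; rewrite /oriented_area_zero (eq_bigr _ (fun i _ => hu i)).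
rewrite -[RHS](edge_sum A).
by rewrite [RHS](reindex_inj (@ordS_inj n)).
Qed.

End ClosedPolygons.

Section Quadrangle.
Variable R : realFieldType.
Notation vec := 'rV[R]_3.

Lemma ratio_in_unit (x y : R) :
  0 <= x -> 0 <= y -> 0 < x + y -> 0 <= x / (x + y) <= 1.
Proof.
move=> hx hy hxy; apply/andP; split; first exact: divr_ge0 (ltW hxy).
by rewrite ler_pdivrMr // mul1r; lra.
Qed.

(* The quadrangle (p X, q Y, p (Z - Y), q (Z - X)), with p q != 0, has a pair
   of opposite sides that meet: the sides 01 and 23 at the parameter
   p / (p - q) when p q < 0, the sides 12 and 30 at q / (p + q) when p q > 0. *)
Lemma quad_sides_meet (p q : R) (X Y Z : vec) :
  p * q != 0 ->
  let u0 := p *: X in let u1 := q *: Y in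
  let u2 := p *: (Z - Y) in let u3 := q *: (Z - X) in
  segments_meet u0 u1 u2 u3 \/ segments_meet u1 u2 u3 u0.
Proof.
move=> hpq u0 u1 u2 u3.
have [hneg|hpos|hzero] := ltgtP (p * q) 0; last by move: hpq; rewrite hzero eqxx.
- left; have hd : 0 < p * p - p * q by nra.
  have hs : 0 <= p * p / (p * p - p * q) <= 1.
    by apply: ratio_in_unit => //; nra.
  exists (p * p / (p * p - p * q)), (p * p / (p * p - p * q)).
  split => //; rewrite /u0 /u1 /u2 /u3; apply: vec_ext; coord_simpl;
    field; exact: lt0r_neq0.
- right; have hd : 0 < q * q + p * q by nra.
  have hs : 0 <= q * q / (q * q + p * q) <= 1.
    by apply: ratio_in_unit => //; nra.
  exists (q * q / (q * q + p * q)), (q * q / (q * q + p * q)).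
  split => //; rewrite /u0 /u1 /u2 /u3; apply: vec_ext; coord_simpl;
    field; exact: lt0r_neq0.
Qed.

Variables w0 w1 w2 : vec.
Hypothesis hD : triple w0 w1 w2 != 0.
Local Notation D := (triple w0 w1 w2).
Local Notation X := (cross w0 w1).
Local Notation Y := (cross w1 w2).
Local Notation Z := (cross w2 w0).

(* Every tuple (p X, q Y, p (Z - Y), q (Z - X)) with p q D = 1 is a support
   system: consecutive cross products are D-multiples of the edges. *)
Lemma quad_support_cross (p q : R) : p * q * D = 1 ->
  [/\ cross (p *: X) (q *: Y) = w1,
      cross (q *: Y) (p *: (Z - Y)) = w2,
      cross (p *: (Z - Y)) (q *: (Z - X)) = - (w0 + w1 + w2)
    & cross (q *: (Z - X)) (p *: X) = w0].
Proof.
by move=> hpq; split; rewrite -[RHS]scale1r -hpq /triple; vec_ring.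
Qed.

(* Conversely every support system has this form: u_i is orthogonal to the two
   edges it produces, which fixes its direction, and the cross products then
   force the coefficients. *)
Lemma quad_support_shape (u0 u1 u2 u3 : vec) :
  cross u0 u1 = w1 -> cross u1 u2 = w2 ->
  cross u2 u3 = - (w0 + w1 + w2) -> cross u3 u0 = w0 ->
  exists p q : R, [/\ p * q * D = 1, u0 = p *: X, u1 = q *: Y,
                      u2 = p *: (Z - Y) & u3 = q *: (Z - X)].
Proof.
move=> h01 h12 h23 h30; have [hw0 hw1 hw2] := triple_neq0_factors hD.
have [p e0] : exists p, u0 = p *: X.
  apply: (orthogonal2_cross (c := w2) hD).
    by rewrite -h30 dot_cross_r.
  by rewrite -h01 dot_cross_l.
have [q e1] : exists q, u1 = q *: Y.
  apply: (orthogonal2_cross (c := w0)); first by rewrite triple_cycle.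
    by rewrite -h01 dot_cross_r.
  by rewrite -h12 dot_cross_l.
have [r e2] : exists r, u2 = r *: (Y - Z).
  have [r ->] : exists r, u2 = r *: cross w2 (- (w0 + w1 + w2)).
    apply: (orthogonal2_cross (c := w0)).
    - suff -> : triple w2 (- (w0 + w1 + w2)) w0 = D by [].
      by rewrite /triple; coord_simpl; ring.
    - by rewrite -h12 dot_cross_r.
    - by rewrite -h23 dot_cross_l.
  by exists r; congr (_ *: _); vec_ring.
have [s e3] : exists s, u3 = s *: (X - Z).
  have [s ->] : exists s, u3 = s *: cross (- (w0 + w1 + w2)) w0.
    apply: (orthogonal2_cross (c := w1)).
    - suff -> : triple (- (w0 + w1 + w2)) w0 w1 = - D by rewrite oppr_eq0.
      by rewrite /triple; coord_simpl; ring.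
    - by rewrite -h23 dot_cross_r.
    - by rewrite -h30 dot_cross_l.
  by exists s; congr (_ *: _); vec_ring.
have hpq : p * q * D = 1.
  apply: (scale_fixed hw1); rewrite -[RHS]h01 e0 e1 /triple; vec_ring.
have hqr : - (q * r * D) = 1.
  apply: (scale_fixed hw2); rewrite -[RHS]h12 e1 e2 /triple; vec_ring.
have hsp : - (s * p * D) = 1.
  apply: (scale_fixed hw0); rewrite -[RHS]h30 e3 e0 /triple; vec_ring.
have er : r = - p.
  transitivity (r * (p * q * D)); first by rewrite hpq mulr1.
  by transitivity (- p * - (q * r * D)); [ring | rewrite hqr mulr1].
have es : s = - q.
  transitivity (s * (p * q * D)); first by rewrite hpq mulr1.
  by transitivity (- q * - (s * p * D)); [ring | rewrite hsp mulr1].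
exists p, q; split => //.
- by rewrite e2 er scaleNr -scalerN opprB.
- by rewrite e3 es scaleNr -scalerN opprB.
Qed.

(* The points p X, q Y, p (Z - Y), q (Z - X) with p q D = 1 lie on the plane
   <N, x> = 1 where N = p w0 + (p + q) w1 + q w2; N != 0 since <N, Y> = p D. *)
Lemma quad_support_plane (p q : R) : p * q * D = 1 ->
  let N := p *: w0 + (p + q) *: w1 + q *: w2 in
  N != 0 /\ [/\ dot N (p *: X) = 1, dot N (q *: Y) = 1,
                dot N (p *: (Z - Y)) = 1 & dot N (q *: (Z - X)) = 1].
Proof.
move=> hpq N; split.
  apply/eqP => hN; have hpD : p * D = 0.
    have <- : dot N Y = p * D by rewrite /N /triple; coord_simpl; ring.
    by rewrite hN; coord_simpl; ring.
  by move: hpq; rewrite mulrAC hpD mul0r => /eqP; rewrite eq_sym oner_eq0.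
by rewrite -hpq; split; rewrite /N /triple; coord_simpl; ring.
Qed.

End Quadrangle.

Section QuadIndices.
Variable R : realFieldType.
Notation vec := 'rV[R]_3.
Local Notation i0 := (inord 0 : 'I_4).
Local Notation i1 := (inord 1 : 'I_4).
Local Notation i2 := (inord 2 : 'I_4).
Local Notation i3 := (inord 3 : 'I_4).

Lemma ordS4 : [/\ ordS i0 = i1, ordS i1 = i2, ordS i2 = i3 & ordS i3 = i0].
Proof. by split; apply: val_inj; rewrite /= !inordK. Qed.

Lemma ord4_ind (P : 'I_4 -> Prop) : P i0 -> P i1 -> P i2 -> P i3 -> forall i, P i.
Proof.
have inordE k (hk : (k < 4)%N) : Ordinal hk = inord k.
  by apply: val_inj; rewrite /= inordK.
by move=> p0 p1 p2 p3 [[|[|[|[|k]]]] hk] //; rewrite inordE.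
Qed.

Lemma support_system4 (A u : 'I_4 -> vec) :
  support_system A u <->
  [/\ cross (u i0) (u i1) = edge A i1, cross (u i1) (u i2) = edge A i2,
      cross (u i2) (u i3) = edge A i3 & cross (u i3) (u i0) = edge A i0].
Proof.
have [o0 o1 o2 o3] := ordS4; split.
  by move=> hu; split; [rewrite -o0 | rewrite -o1 | rewrite -o2 | rewrite -o3].
by move=> [h01 h12 h23 h30]; apply: ord4_ind; rewrite ?o0 ?o1 ?o2 ?o3.
Qed.

Lemma quad_last_edge (A : 'I_4 -> vec) :
  edge A i3 = - (edge A i0 + edge A i1 + edge A i2).
Proof. have [o0 o1 o2 o3] := ordS4; rewrite /edge o0 o1 o2 o3; vec_ring. Qed.

End QuadIndices.

Theorem theorem3p1 (R : realFieldType) (A : 'I_4 -> 'rV[R]_3) :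
  generic A ->
  regular A /\
  (forall u : 'I_4 -> 'rV[R]_3, support_system A u ->
     [/\ coplanar_points u, oriented_area_zero u & self_intersecting4 u]).
Proof.
move=> hgen; have [o0 o1 _ _] := ordS4.
set w0 := edge A (inord 0); set w1 := edge A (inord 1); set w2 := edge A (inord 2).
have hnc : ~ coplanar w0 w1 w2 by have := hgen.2 (inord 0); rewrite o0 o1.
have hD := triple_neq0 hnc.
have hw3 : edge A (inord 3) = - (w0 + w1 + w2) by exact: quad_last_edge.
split.
  split => //.
  have hpq : 1 * (triple w0 w1 w2)^-1 * triple w0 w1 w2 = 1 by rewrite mul1r mulVf.
  have [c01 c12 c23 c30] := quad_support_cross hpq.
  exists (fun i => nth 0 [:: 1 *: cross w0 w1; (triple w0 w1 w2)^-1 *: cross w1 w2;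
    1 *: (cross w2 w0 - cross w1 w2); (triple w0 w1 w2)^-1 *: (cross w2 w0 - cross w0 w1)] i).
  by apply/support_system4; rewrite /= !inordK //= hw3.
move=> u hu; have [h01 h12 h23 h30] := (support_system4 A u).1 hu.
rewrite hw3 in h23.
have [p [q [hpq e0 e1 e2 e3]]] := quad_support_shape hD h01 h12 h23 h30.
have [hN [d0 d1 d2 d3]] := quad_support_plane hpq.
split.
- exists (p *: w0 + (p + q) *: w1 + q *: w2), 1; split => //.
  by apply: ord4_ind; rewrite ?e0 ?e1 ?e2 ?e3.
- exact: support_oriented_area_zero hu.
rewrite /self_intersecting4 e0 e1 e2 e3; apply: quad_sides_meet.
by apply: contra_eq_neq hpq => ->; rewrite mul0r eq_sym oner_neq0.
Qed.
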